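(* Let $\mathfrak{d}\geq 2$ be an integer, $c>0$, $\lambda>0$, and let $p_{\mathbf{X}_{\mathfrak{d}}}(\mathbf{x},t)$ denote the density of the absolutely continuous component of the law of the random flight $\mathbf{X}_{\mathfrak{d}}(t)$ described in the context. Define, for $t>0$ and $\mathbf{x}\in\mathbb{R}^{\mathfrak{d}}$ with $\|\mathbf{x}\|<ct$, $$f(\mathbf{x},t)=\pi^{\mathfrak{d}/2}(ct)^{\mathfrak{d}-2}\,E_{\frac{\mathfrak{d}-1}{2},\frac{\mathfrak{d}}{2},\frac{\mathfrak{d}-1}{2},\frac{\mathfrak{d}-1}{2}}\!\left(\left(\tfrac{\lambda t}{2}\right)^{\mathfrak{d}-1}\right)p_{\mathbf{X}_{\mathfrak{d}}}(\mathbf{x},t).$$ Then $$f(\mathbf{x},t)=\sum_{k=1}^{\infty}\left(\frac{\lambda}{2c}\right)^{k(\mathfrak{d}-1)}\frac{(c^2t^2-\|\mathbf{x}\|^2)^{\frac{k}{2}(\mathfrak{d}-1)-1}}{\Gamma\!\left(\frac{k}{2}(\mathfrak{d}-1)\right)\Gamma\!\left(\frac{\mathfrak{d}-1}{2}(k+1)\right)},$$ and $u=f$ solves the higher order Klein–Gordon equation $$\left(\frac{\partial^2}{\partial t^2}-c^2\Delta\right)^{\mathfrak{d}-1}u(\mathbf{x},t)=\lambda^{2(\mathfrak{d}-1)}u(\mathbf{x},t),\qquad \Delta=\sum_{j=1}^{\mathfrak{d}}\frac{\partial^2}{\partial x_j^2},$$ in the region $\{(\mathbf{x},t):t>0,\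 \|\mathbf{x}\|<ct\}$.
   Context: Random flight $\mathbf{X}_{\mathfrak{d}}(t)$ in $\mathbb{R}^{\mathfrak{d}}$: a particle starts at the origin at time $0$ and moves with constant speed $c>0$; it changes direction $\mathfrak{N}_{\mathfrak{d}}(t)$ times in $(0,t)$; the successive directions are independent and uniformly distributed on the unit sphere $S^{\mathfrak{d}-1}$. Given $\mathfrak{N}_{\mathfrak{d}}(t)=k$, the durations $\tau_1,\dots,\tau_{k+1}$ of the $k+1$ straight segments ($\tau_{k+1}=t-\sum_{j=1}^k\tau_j$) have joint density $\frac{\Gamma((k+1)(\mathfrak{d}-1))}{[\Gamma(\mathfrak{d}-1)]^{k+1}}\frac{1}{t^{(k+1)(\mathfrak{d}-1)-1}}\prod_{j=1}^{k+1}\tau_j^{\mathfrak{d}-2}$ (a Dirichlet law with parameters $(\mathfrak{d}-1,\dots,\mathfrak{d}-1)$ rescaled to total $t$), independent of the directions. The number of changes has law $P\{\mathfrak{N}_{\mathfrak{d}}(t)=k\}=\frac{1}{E_{\mathfrak{d}-1,\mathfrak{d}-1}((\lambda t)^{\mathfrak{d}-1})}\frac{(\lambda t)^{k(\mathfrak{d}-1)}}{\Gamma((k+1)(\mathfrak{d}-1))}$, $k=0,1,2,\dots$, where $E_{\alpha,\beta}(x)=\sum_{k\ge0}x^k/\Gamma(\alpha k+\beta)$. It is known that, for $k\geq1$, the conditional law of $\mathbf{X}_{\mathfrak{d}}(t)$ given $\mathfrak{N}_{\mathfrak{d}}(t)=k$ has density $p(\mathbf{x},t;k)=\frac{\Gamma(\frac{k+1}{2}(\mathfrak{d}-1)+\frac12)}{\Gamma(\frac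 k2(\mathfrak{d}-1))}\frac{(c^2t^2-\|\mathbf{x}\|^2)^{\frac k2(\mathfrak{d}-1)-1}}{\pi^{\mathfrak{d}/2}(ct)^{(k+1)(\mathfrak{d}-1)-1}}$ on $\|\mathbf{x}\|<ct$. The absolutely continuous component of the law of $\mathbf{X}_{\mathfrak{d}}(t)$ has density $p_{\mathbf{X}_{\mathfrak{d}}}(\mathbf{x},t)=\sum_{k\ge1}p(\mathbf{x},t;k)P\{\mathfrak{N}_{\mathfrak{d}}(t)=k\}$. The multi-index Mittag-Leffler function used is $E_{\frac{\mathfrak{d}-1}{2},\frac{\mathfrak{d}}{2},\frac{\mathfrak{d}-1}{2},\frac{\mathfrak{d}-1}{2}}(z)=\sum_{k=0}^\infty\frac{z^k}{\Gamma(\frac{k+1}{2}(\mathfrak{d}-1)+\frac12)\Gamma(\frac{\mathfrak{d}-1}{2}(k+1))}$. *)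

From Stdlib Require Import Reals List.
From Coquelicot Require Import Coquelicot.
Open Scope R_scope.

Definition Gamma (s : R) : R :=
  RInt_gen (fun x => Rpower x (s - 1) * exp (- x)) (at_right 0) (Rbar_locally p_infty).

Definition ML2 (a b z : R) : R :=
  Series (fun k => z ^ k / Gamma (a * INR k + b)).

(** multi-index Mittag-Leffler function
    E_{(d-1)/2, d/2, (d-1)/2, (d-1)/2}(z)
      = sum_k z^k / (Gamma((k+1)(d-1)/2 + 1/2) Gamma((d-1)(k+1)/2)) *)
Definition ML4 (d : nat) (z : R) : R :=
  Series (fun k => z ^ k /
    (Gamma (INR (k + 1) / 2 * INR (d - 1) + / 2) *
     Gamma (INR (d - 1) / 2 * INR (k + 1)))).

(** points of R^d are represented by functions nat -> R; only the coordinates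
    0 .. d-1 are used. *)
Fixpoint sum_lt (n : nat) (f : nat -> R) : R :=
  match n with O => 0 | S m => sum_lt m f + f m end.

Definition norm_d (d : nat) (x : nat -> R) : R := sqrt (sum_lt d (fun j => x j ^ 2)).

(** law of the number of changes of direction N_d(t) *)
Definition probN (d : nat) (lam t : R) (k : nat) : R :=
  / ML2 (INR (d - 1)) (INR (d - 1)) ((lam * t) ^ (d - 1)) *
  ((lam * t) ^ (k * (d - 1)) / Gamma (INR ((k + 1) * (d - 1)))).

(** conditional density p(x,t;k) of X_d(t) given N_d(t) = k, for k >= 1 *)
Definition p_cond (d : nat) (c : R) (x : nat -> R) (t : R) (k : nat) : R :=
  Gamma (INR (k + 1) / 2 * INR (d - 1) + / 2) / Gamma (INR k / 2 * INR (d - 1)) *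
  (Rpower (c ^ 2 * t ^ 2 - norm_d d x ^ 2) (INR k / 2 * INR (d - 1) - 1) /
   (Rpower PI (INR d / 2) * (c * t) ^ ((k + 1) * (d - 1) - 1))).

(** density of the absolutely continuous component of the law of X_d(t):
    sum_{k>=1} p(x,t;k) P{N_d(t) = k} *)
Definition pX (d : nat) (c lam : R) (x : nat -> R) (t : R) : R :=
  Series (fun k => p_cond d c x t (S k) * probN d lam t (S k)).

Definition f_fun (d : nat) (c lam : R) (x : nat -> R) (t : R) : R :=
  Rpower PI (INR d / 2) * (c * t) ^ (d - 2) *
  ML4 d ((lam * t / 2) ^ (d - 1)) * pX d c lam x t.

Definition upd (x : nat -> R) (j : nat) (s : R) : nat -> R :=
  fun i => if Nat.eqb i j then s else x i.

(** partial derivative: [None] = d/dt, [Some j] = d/dx_j *)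
Definition partial (o : option nat) (u : (nat -> R) -> R -> R) : (nat -> R) -> R -> R :=
  fun x t => match o with
             | None => Derive (fun s => u x s) t
             | Some j => Derive (fun s => u (upd x j s) t) (x j)
             end.

Definition ex_partial (o : option nat) (u : (nat -> R) -> R -> R) (x : nat -> R) (t : R) : Prop :=
  match o with
  | None => ex_derive (fun s => u x s) t
  | Some j => ex_derive (fun s => u (upd x j s) t) (x j)
  end.

Definition valid_dir (d : nat) (o : option nat) : Prop :=
  match o with None => True | Some j => (j < d)%nat end.

Definition iter_partial (l : list (option nat)) (u : (nat -> R) -> R -> R) :=
  fold_right partial u l.

Definition smooth_on (d : nat) (U : (nat -> R) -> R -> Prop) (u : (nat -> R) -> R -> R) : Prop :=
  forall (l : list (option nat)) (o : option nat),
    List.Forall (valid_dir d) (o :: l) ->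
    forall x t, U x t -> ex_partial o (iter_partial l u) x t.

Definition wave_op (d : nat) (c : R) (u : (nat -> R) -> R -> R) : (nat -> R) -> R -> R :=
  fun x t => partial None (partial None u) x t
             - c ^ 2 * sum_lt d (fun j => partial (Some j) (partial (Some j) u) x t).

Fixpoint wave_op_iter (n d : nat) (c : R) (u : (nat -> R) -> R -> R) : (nat -> R) -> R -> R :=
  match n with O => u | S m => wave_op d c (wave_op_iter m d c u) end.

Definition cone (d : nat) (c : R) (x : nat -> R) (t : R) : Prop :=
  0 < t /\ norm_d d x < c * t.

From Stdlib Require Import Reals List Lra Psatz FunctionalExtensionality.
From Coquelicot Require Import Coquelicot.
Open Scope R_scope.

(* Put [s = c^2 t^2 - |x|^2], [N = d - 1] and [m = N / 2].  Substituting the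
   conditional densities and the law of [N_d(t)], and simplifying the Gamma factors
   with Legendre's duplication formula, turns [f] into [s^(-1) G(s^m)], where [G] is
   the entire series with coefficients [(lambda / 2c)^(kN) / (Gamma (mk) Gamma (mk + m))];
   this is the series expansion.  Functions [s^e H(s^m)] with [H] entire are stable
   under the partial derivatives in [t] and [x_j], which gives smoothness on the cone,
   and the wave operator maps [s^e H(s^m)] to [s^(e-1) H'(s^m)], where the [k]-th
   coefficient of [H'] is that of [H] times [4 c^2 (e + mk) (e + mk + m)].  After [N]
   applications starting from [e = -1], these factors are falling factorials that shift
   the Gamma arguments by [N = 2m]: the coefficient of index [k + 2] becomes
   [lambda^(2N)] times that of index [k], those of indices [0] and [1] vanish, and the
   resulting factor [s^(2m)] makes up for the change of exponent from [-1] to [-1 - N]. *)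

Lemma locally_pos (x : R) : 0 < x -> locally x (fun y => 0 < y).
Proof.
  intros Hx. exists (mkposreal x Hx). intros y Hy.
  change (Rabs (y - x) < x) in Hy. apply Rabs_def2 in Hy as [_ Hy]. lra.
Qed.

Lemma exp_le_compat a b : a <= b -> exp a <= exp b.
Proof. intros [H | ->]; [left; apply exp_increasing|]; lra. Qed.

Lemma Rpower_pos x y : 0 < Rpower x y.
Proof. apply exp_pos. Qed.

Lemma Rpower_1_l y : Rpower 1 y = 1.
Proof. unfold Rpower. rewrite ln_1, Rmult_0_r. apply exp_0. Qed.

Lemma is_derive_Rpower y x : 0 < x -> is_derive (fun z => Rpower z y) x (y * Rpower x (y - 1)).
Proof. intros. apply is_derive_Reals, derivable_pt_lim_power; auto. Qed.

Lemma Rpower_continuous y x : 0 < x -> continuous (fun z => Rpower z y) x.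
Proof. intros. apply (ex_derive_continuous (fun z => Rpower z y)). eexists. apply is_derive_Rpower; auto. Qed.

(* Coquelicot's lemmas state equations with the operations of its algebraic
   structures over [R]; [ring] and [field] need them in terms of [Rplus] etc. *)
Ltac R_eq :=
  lazymatch goal with |- ?a = ?b => change (@eq R a b) end;
  unfold zero, one, opp, plus, minus, mult, scal; simpl; unfold mult; simpl.

Lemma is_derive_val (f : R -> R) x l l' : is_derive f x l -> l = l' -> is_derive f x l'.
Proof. intros H <-. exact H. Qed.

Definition Gamma_integrand (s x : R) : R := Rpower x (s - 1) * exp (- x).

Lemma Gamma_integrand_pos s x : 0 < Gamma_integrand s x.
Proof. apply Rmult_lt_0_compat; [apply Rpower_pos | apply exp_pos]. Qed.

Lemma Gamma_integrand_continuous s x : 0 < x -> continuous (Gamma_integrand s) x.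
Proof.
  intros Hx. apply (continuous_mult (fun z => Rpower z (s - 1)) (fun z => exp (- z))).
  - apply Rpower_continuous; auto.
  - apply (ex_derive_continuous (fun z => exp (- z))). auto_derive; auto.
Qed.

Lemma ex_RInt_Gamma_integrand s a b : 0 < a -> 0 < b -> ex_RInt (Gamma_integrand s) a b.
Proof.
  intros. apply (ex_RInt_continuous (V := R_CompleteNormedModule)). intros z Hz.
  apply Gamma_integrand_continuous.
  assert (0 < Rmin a b) by (apply Rmin_glb_lt; auto). lra.
Qed.

Lemma Gamma_integrand_le_Rpower s x : 0 < x -> Gamma_integrand s x <= Rpower x (s - 1).
Proof.
  intros. unfold Gamma_integrand. pose proof (Rpower_pos x (s - 1)).
  assert (exp (- x) <= 1) by (rewrite <- exp_0; apply exp_le_compat; lra). nra.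
Qed.

(* [(2A)^A] with [A = |s - 1| + 1] bounds [x^(s-1) e^(-x/2)] on [x >= 1], by
   [ln y <= y - 1] at [y = x / 2A]. *)
Definition Gamma_tail_const (s : R) : R :=
  exp ((Rabs (s - 1) + 1) * ln (2 * (Rabs (s - 1) + 1))).

Lemma Gamma_integrand_le_exp_half s x :
  1 <= x -> Gamma_integrand s x <= Gamma_tail_const s * exp (- x / 2).
Proof.
  intros Hx. unfold Gamma_integrand, Gamma_tail_const, Rpower. rewrite <- !exp_plus.
  apply exp_le_compat.
  set (A := Rabs (s - 1) + 1).
  assert (HA : 0 < A) by (unfold A; pose proof (Rabs_pos (s - 1)); lra).
  assert (Hs : s - 1 <= A) by (unfold A; pose proof (Rle_abs (s - 1)); lra).
  assert (Hl : 0 <= ln x) by (rewrite <- ln_1; apply ln_le; lra).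
  assert (Hy : 0 < x / (2 * A)) by (apply Rdiv_lt_0_compat; lra).
  assert (Hlx : ln x = ln (2 * A) + ln (x / (2 * A))).
  { rewrite <- ln_mult by lra. f_equal. field. lra. }
  assert (Hln : ln (x / (2 * A)) <= x / (2 * A) - 1).
  { pose proof (exp_ineq1_le (ln (x / (2 * A)))). rewrite exp_ln in H; lra. }
  assert (H1 : (s - 1) * ln x <= A * ln x) by (apply Rmult_le_compat_r; auto).
  assert (H2 : A * ln (x / (2 * A)) <= x / 2).
  { apply Rle_trans with (A * (x / (2 * A) - 1)); [apply Rmult_le_compat_l; lra|].
    replace (A * (x / (2 * A) - 1)) with (x / 2 - A) by (field; lra). lra. }
  rewrite Hlx in H1 |- *. lra.
Qed.

Lemma RInt_Rpower_1 s a : 0 < s -> 0 < a <= 1 ->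
  RInt (fun x => Rpower x (s - 1)) a 1 = (1 - Rpower a s) / s.
Proof.
  intros Hs Ha.
  assert (H : is_RInt (fun x => Rpower x (s - 1)) a 1
                (minus ((fun x => Rpower x s / s) 1) ((fun x => Rpower x s / s) a))).
  { apply (is_RInt_derive (V := R_CompleteNormedModule) (fun x => Rpower x s / s));
      intros x Hx; rewrite Rmin_left, Rmax_right in Hx by lra.
    - apply (is_derive_ext (fun x => / s * Rpower x s)); [intros; apply Rmult_comm|].
      replace (Rpower x (s - 1)) with (/ s * (s * Rpower x (s - 1))) by (field; lra).
      apply is_derive_scal, is_derive_Rpower. lra.
    - apply Rpower_continuous. lra. }
  rewrite (is_RInt_unique _ _ _ _ H). cbn. rewrite Rpower_1_l. field. lra.
Qed.

Lemma RInt_exp_half K b : 1 <= b ->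
  RInt (fun x => K * exp (- x / 2)) 1 b = 2 * K * (exp (- 1 / 2) - exp (- b / 2)).
Proof.
  intros Hb.
  assert (H : is_RInt (fun x => K * exp (- x / 2)) 1 b
                (minus ((fun x => -2 * K * exp (- x / 2)) b) ((fun x => -2 * K * exp (- x / 2)) 1))).
  { apply (is_RInt_derive (V := R_CompleteNormedModule) (fun x => -2 * K * exp (- x / 2)));
      intros x _.
    - auto_derive; auto. R_eq. unfold Rdiv. field.
    - apply (ex_derive_continuous (fun x => K * exp (- x / 2))). auto_derive; auto. }
  rewrite (is_RInt_unique _ _ _ _ H). cbn. replace (- (1) / 2) with (-1 / 2) by field. ring.
Qed.

Lemma RInt_Gamma_integrand_bounded s a b : 0 < s -> 0 < a <= 1 -> 1 <= b ->
  RInt (Gamma_integrand s) a b <= / s + 2 * Gamma_tail_const s.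
Proof.
  intros Hs Ha Hb.
  rewrite <- (RInt_Chasles (V := R_CompleteNormedModule) (Gamma_integrand s) a 1 b)
    by (apply ex_RInt_Gamma_integrand; lra).
  cbn. apply Rplus_le_compat.
  - apply Rle_trans with (RInt (fun x => Rpower x (s - 1)) a 1).
    + apply RInt_le; [lra | apply ex_RInt_Gamma_integrand; lra | |].
      * apply (ex_RInt_continuous (V := R_CompleteNormedModule)). intros z Hz.
        rewrite Rmin_left in Hz by lra. apply Rpower_continuous. lra.
      * intros x Hx. apply Gamma_integrand_le_Rpower. lra.
    + rewrite RInt_Rpower_1 by lra. pose proof (Rpower_pos a s).
      pose proof (Rinv_0_lt_compat s Hs). unfold Rdiv. nra.
  - apply Rle_trans with (RInt (fun x => Gamma_tail_const s * exp (- x / 2)) 1 b).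
    + apply RInt_le; [lra | apply ex_RInt_Gamma_integrand; lra | |].
      * apply (ex_RInt_continuous (V := R_CompleteNormedModule)). intros z Hz.
        apply (ex_derive_continuous (fun x => Gamma_tail_const s * exp (- x / 2))).
        auto_derive; auto.
      * intros x Hx. apply Gamma_integrand_le_exp_half. lra.
    + rewrite RInt_exp_half by lra.
      pose proof (exp_pos (- b / 2)).
      assert (exp (- 1 / 2) <= 1) by (rewrite <- exp_0; apply exp_le_compat; lra).
      assert (0 < Gamma_tail_const s) by apply exp_pos. nra.
Qed.

Lemma RInt_Gamma_integrand_mono s a b a' b' : 0 < a' <= a -> a <= b -> b <= b' ->
  RInt (Gamma_integrand s) a b <= RInt (Gamma_integrand s) a' b'.
Proof.
  intros Ha Hab Hb.
  assert (Hnonneg : forall u v, 0 < u <= v -> 0 <= RInt (Gamma_integrand s) u v).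
  { intros u v Huv. apply RInt_ge_0; [lra | apply ex_RInt_Gamma_integrand; lra |].
    intros; left; apply Gamma_integrand_pos. }
  assert (Hsplit : forall u v w, 0 < u -> 0 < v -> 0 < w ->
    RInt (Gamma_integrand s) u w = RInt (Gamma_integrand s) u v + RInt (Gamma_integrand s) v w).
  { intros u v w Hu Hv Hw. symmetry.
    apply (RInt_Chasles (V := R_CompleteNormedModule)); apply ex_RInt_Gamma_integrand; auto. }
  rewrite (Hsplit a' a b'), (Hsplit a b b') by lra.
  pose proof (Hnonneg a' a ltac:(lra)). pose proof (Hnonneg b b' ltac:(lra)). lra.
Qed.

(* The improper integral is the supremum of the integrals over [a, b] with
   [a <= 1 <= b], which are bounded and increase as [a] decreases and [b] increases. *)
Lemma is_RInt_gen_Gamma_integrand s : 0 < s -> exists L,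
  is_RInt_gen (Gamma_integrand s) (at_right 0) (Rbar_locally p_infty) L /\ 0 < L.
Proof.
  intros Hs.
  set (E := fun y => exists a b, 0 < a <= 1 /\ 1 <= b /\ y = RInt (Gamma_integrand s) a b).
  assert (HB : bound E).
  { exists (/ s + 2 * Gamma_tail_const s). intros y (a & b & Ha & Hb & ->).
    apply RInt_Gamma_integrand_bounded; auto. }
  assert (HE : exists y, E y) by (exists (RInt (Gamma_integrand s) 1 1), 1, 1; repeat split; lra).
  destruct (completeness E HB HE) as [L [HLub HLleast]].
  exists L. split.
  - apply (filterlimi_lim_ext_loc (fun ab => RInt (Gamma_integrand s) (fst ab) (snd ab))).
    + apply (Filter_prod _ _ _ (fun a => 0 < a) (fun b => 0 < b)).
      * exists (mkposreal 1 Rlt_0_1). auto.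
      * exists 0. auto.
      * intros a b Ha Hb. apply (RInt_correct (V := R_CompleteNormedModule)).
        apply ex_RInt_Gamma_integrand; auto.
    + apply filterlim_locally. intros eps.
      assert (Happrox : exists y, E y /\ L - eps < y).
      { apply Classical_Pred_Type.not_all_not_ex. intros Hn.
        assert (Hub : is_upper_bound E (L - eps)).
        { intros y Hy. apply Rnot_lt_le. intros Hl. apply (Hn y). split; auto. }
        pose proof (HLleast _ Hub). destruct eps; simpl in *; lra. }
      destruct Happrox as (y & (a0 & b0 & Ha0 & Hb0 & ->) & Hy).
      apply (Filter_prod _ _ _ (fun a => 0 < a <= a0) (fun b => b0 <= b)).
      * exists (mkposreal a0 (proj1 Ha0)). intros a Ha Ha_pos.
        change (Rabs (a - 0) < a0) in Ha. rewrite Rminus_0_r, Rabs_right in Ha by lra. lra.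
      * exists b0. intros; lra.
      * intros a b Ha Hb. change (Rabs (RInt (Gamma_integrand s) a b - L) < eps).
        assert (RInt (Gamma_integrand s) a0 b0 <= RInt (Gamma_integrand s) a b)
          by (apply RInt_Gamma_integrand_mono; lra).
        assert (RInt (Gamma_integrand s) a b <= L)
          by (apply HLub; exists a, b; repeat split; lra).
        apply Rabs_def1; destruct eps; simpl in *; lra.
  - apply Rlt_le_trans with (RInt (Gamma_integrand s) (1 / 2) 1).
    + apply RInt_gt_0; [lra | intros; apply Gamma_integrand_pos |].
      intros; apply Gamma_integrand_continuous; lra.
    + apply HLub. exists (1 / 2), 1. repeat split; lra.
Qed.

Lemma is_RInt_gen_Gamma s : 0 < s ->
  is_RInt_gen (Gamma_integrand s) (at_right 0) (Rbar_locally p_infty) (Gamma s).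
Proof.
  intros Hs. destruct (is_RInt_gen_Gamma_integrand s Hs) as [L [HL _]].
  replace (Gamma s) with L; auto.
  symmetry. unfold Gamma. apply (is_RInt_gen_unique (V := R_CompleteNormedModule)); auto.
Qed.

Lemma Gamma_pos s : 0 < s -> 0 < Gamma s.
Proof.
  intros Hs. destruct (is_RInt_gen_Gamma_integrand s Hs) as [L [HL HL0]].
  replace (Gamma s) with L; auto.
  symmetry. unfold Gamma. apply (is_RInt_gen_unique (V := R_CompleteNormedModule)); auto.
Qed.

Lemma Rpower_exp_lim_0 s : 0 < s ->
  filterlim (fun x => Rpower x s * exp (- x)) (at_right 0) (locally 0).
Proof.
  intros Hs. apply filterlim_locally. intros eps.
  exists (mkposreal (Rpower eps (/ s)) (Rpower_pos _ _)). intros y Hy Hy0.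
  change (Rabs (y - 0) < Rpower eps (/ s)) in Hy. rewrite Rminus_0_r, Rabs_right in Hy by lra.
  change (Rabs (Rpower y s * exp (- y) - 0) < eps). rewrite Rminus_0_r.
  pose proof (Rpower_pos y s). pose proof (exp_pos (- y)).
  assert (exp (- y) <= 1) by (rewrite <- exp_0; apply exp_le_compat; lra).
  rewrite Rabs_right by nra.
  assert (Rpower y s < eps).
  { replace (pos eps) with (Rpower (Rpower eps (/ s)) s).
    - apply Rlt_Rpower_l; auto.
    - rewrite Rpower_mult, Rinv_l, Rpower_1 by (destruct eps; simpl; lra). reflexivity. }
  nra.
Qed.

Lemma Rpower_exp_lim_infty s :
  filterlim (fun x => Rpower x s * exp (- x)) (Rbar_locally p_infty) (locally 0).
Proof.
  apply filterlim_locally. intros eps.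
  set (K := Gamma_tail_const (s + 1)).
  assert (HK : 0 < K) by apply exp_pos.
  exists (Rmax 1 (-2 * ln (eps / K))). intros y Hy.
  assert (Hy1 : 1 < y) by (eapply Rle_lt_trans; [apply Rmax_l | eauto]).
  assert (Hy2 : -2 * ln (eps / K) < y) by (eapply Rle_lt_trans; [apply Rmax_r | eauto]).
  change (Rabs (Rpower y s * exp (- y) - 0) < eps). rewrite Rminus_0_r.
  pose proof (Gamma_integrand_pos (s + 1) y) as Hpos.
  pose proof (Gamma_integrand_le_exp_half (s + 1) y (Rlt_le _ _ Hy1)) as Hle.
  unfold Gamma_integrand in Hpos, Hle. replace (s + 1 - 1) with s in Hpos, Hle by ring.
  rewrite Rabs_right by lra.
  assert (exp (- y / 2) < eps / K).
  { rewrite <- (exp_ln (eps / K)) by (apply Rdiv_lt_0_compat; auto; apply cond_pos).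
    apply exp_increasing. lra. }
  apply Rle_lt_trans with (K * exp (- y / 2)); auto.
  apply Rlt_le_trans with (K * (eps / K)); [apply Rmult_lt_compat_l; auto | right; field; lra].
Qed.

Lemma segment_pos_near_0_infty : filter_prod (at_right 0) (Rbar_locally p_infty)
  (fun ab => forall x, Rmin (fst ab) (snd ab) <= x <= Rmax (fst ab) (snd ab) -> 0 < x).
Proof.
  apply (Filter_prod _ _ _ (fun a => 0 < a) (fun b => 0 < b)).
  - exists (mkposreal 1 Rlt_0_1). auto.
  - exists 0. auto.
  - intros a b Ha Hb x Hx. simpl in Hx. assert (0 < Rmin a b) by (apply Rmin_glb_lt; auto). lra.
Qed.

(* Integration by parts, as the integral of the derivative of [- x^s e^(-x)]. *)
Lemma Gamma_succ s : 0 < s -> Gamma (s + 1) = s * Gamma s.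
Proof.
  intros Hs.
  set (F := fun x => - (Rpower x s * exp (- x))).
  set (G := fun x => Gamma_integrand (s + 1) x - s * Gamma_integrand s x).
  assert (HF : forall x, 0 < x -> is_derive F x (G x)).
  { intros x Hx. unfold F, G, Gamma_integrand. replace (s + 1 - 1) with s by ring.
    eapply is_derive_val.
    - apply (is_derive_opp (fun x => Rpower x s * exp (- x))), Derive.is_derive_mult;
        [apply is_derive_Rpower; auto | auto_derive; auto].
    - R_eq. ring. }
  assert (HG : forall x, 0 < x -> continuous G x).
  { intros x Hx. apply (continuous_minus (Gamma_integrand (s + 1)) (fun y => s * Gamma_integrand s y)).
    - apply Gamma_integrand_continuous; auto.
    - apply (continuous_scal_r s (Gamma_integrand s)), Gamma_integrand_continuous; auto. }
  pose proof segment_pos_near_0_infty as Hpos.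
  assert (HI : is_RInt_gen G (at_right 0) (Rbar_locally p_infty) (- 0 - - 0)).
  { apply (is_RInt_gen_ext (Derive F)).
    - generalize Hpos. apply filter_imp. intros ab H x Hx. apply is_derive_unique, HF, H.
      split; apply Rlt_le, Hx.
    - apply (is_RInt_gen_Derive F (- 0) (- 0)).
      + generalize Hpos. apply filter_imp. intros ab H x Hx. eexists. apply HF; auto.
      + generalize Hpos. apply filter_imp. intros ab H x Hx.
        apply (continuous_ext_loc _ G); [| apply HG; auto].
        generalize (locally_pos x (H x Hx)). apply filter_imp. intros y Hy.
        symmetry. apply is_derive_unique, HF; auto.
      + apply (filterlim_comp _ _ _ (fun x => Rpower x s * exp (- x)) Ropp _ (locally 0));
          [apply Rpower_exp_lim_0; auto | apply (filterlim_opp 0)].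
      + apply (filterlim_comp _ _ _ (fun x => Rpower x s * exp (- x)) Ropp _ (locally 0));
          [apply Rpower_exp_lim_infty | apply (filterlim_opp 0)]. }
  pose proof (is_RInt_gen_plus _ _ _ _ HI (is_RInt_gen_scal _ s _ (is_RInt_gen_Gamma s Hs))) as HT.
  unfold Gamma at 1. apply (is_RInt_gen_unique (V := R_CompleteNormedModule)).
  replace (s * Gamma s) with (plus (- 0 - - 0) (scal s (Gamma s))) by (R_eq; ring).
  eapply is_RInt_gen_ext; [| exact HT].
  apply filter_forall. intros ab x _. unfold G. R_eq. fold (Gamma_integrand (s + 1) x). ring.
Qed.

Fixpoint falling (w : R) (n : nat) : R :=
  match n with O => 1 | S n' => falling w n' * (w - 1 - INR n') end.

Lemma Gamma_falling n w : 0 < w - INR n -> Gamma w = Gamma (w - INR n) * falling w n.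
Proof.
  induction n as [|n IH]; intros H; cbn [falling].
  - rewrite Rminus_0_r. ring.
  - rewrite S_INR in H. rewrite IH by lra.
    replace (w - INR n) with ((w - INR (S n)) + 1) by (rewrite S_INR; ring).
    rewrite Gamma_succ by (rewrite S_INR; lra). rewrite S_INR. ring.
Qed.

Lemma falling_pos n w : 0 < w - INR n -> 0 < falling w n.
Proof.
  induction n as [|n IH]; intros H; cbn [falling]; [lra |].
  rewrite S_INR in H. apply Rmult_lt_0_compat; [apply IH |]; lra.
Qed.

Lemma falling_ge n w : (1 <= n)%nat -> 1 <= w - INR n -> w - INR n <= falling w n.
Proof.
  intros Hn. induction Hn as [|n Hn IH]; intros H; cbn [falling]; rewrite ?S_INR in *.
  - simpl in *. lra.
  - specialize (IH ltac:(lra)). nra.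
Qed.

Lemma falling_nat_diag n : (1 <= n)%nat -> falling (INR n) n = 0.
Proof. intros H. destruct n as [|n]; [lia |]. cbn [falling]. rewrite S_INR. ring. Qed.

Lemma Gamma_duplication_nat n : (1 <= n)%nat ->
  Gamma (INR n / 2) * Gamma (INR n / 2 + / 2) * 2 ^ (n - 1) = Gamma (/ 2) * Gamma (INR n).
Proof.
  assert (Hstep : forall n, (1 <= n)%nat ->
    Gamma (INR n / 2) * Gamma (INR n / 2 + / 2) * 2 ^ (n - 1) = Gamma (/ 2) * Gamma (INR n) /\
    Gamma (INR (S n) / 2) * Gamma (INR (S n) / 2 + / 2) * 2 ^ (S n - 1)
      = Gamma (/ 2) * Gamma (INR (S n))).
  { intros n0 Hn. induction Hn as [|m Hm [IH1 IH2]].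
    - assert (G1 : Gamma (/ 2 + 1) = / 2 * Gamma (/ 2)) by (apply Gamma_succ; lra).
      assert (G2 : Gamma (1 + 1) = 1 * Gamma 1) by (apply Gamma_succ; lra).
      simpl. split.
      + replace (1 / 2) with (/ 2) by field. replace (/ 2 + / 2) with 1 by field. ring.
      + replace ((1 + 1) / 2) with 1 by field. replace (1 + / 2) with (/ 2 + 1) by ring.
        rewrite G1, G2. field.
    - split; [exact IH2 |].
      assert (Hz : 0 < INR m) by (apply lt_0_INR; lia).
      replace (INR (S (S m)) / 2) with (INR m / 2 + 1) by (rewrite !S_INR; field).
      replace (INR (S (S m))) with ((INR m + 1) + 1) by (rewrite !S_INR; ring).
      replace (INR m / 2 + 1 + / 2) with ((INR m / 2 + / 2) + 1) by ring.
      replace (2 ^ (S (S m) - 1)) with (4 * 2 ^ (m - 1))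
        by (replace (S (S m) - 1)%nat with (S (S (m - 1))) by lia; simpl; ring).
      rewrite !Gamma_succ by lra.
      transitivity (INR m * (INR m + 1) *
        (Gamma (INR m / 2) * Gamma (INR m / 2 + / 2) * 2 ^ (m - 1))); [field |].
      rewrite IH1. ring. }
  intros Hn. exact (proj1 (Hstep n Hn)).
Qed.

Definition entire (a : nat -> R) : Prop := CV_radius a = p_infty.

Lemma entire_ext a b : (forall n, a n = b n) -> entire a -> entire b.
Proof. unfold entire. intros H Ha. rewrite <- Ha. symmetry. apply CV_radius_ext; auto. Qed.

Lemma ex_pseries_entire a x : entire a -> ex_pseries a x.
Proof. intros Ha. apply CV_radius_inside. rewrite Ha. simpl. auto. Qed.

Lemma entire_plus a b : entire a -> entire b -> entire (fun n => a n + b n).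
Proof.
  unfold entire. intros Ha Hb. pose proof (CV_radius_plus a b) as H. rewrite Ha, Hb in H.
  rewrite (CV_radius_ext _ (PS_plus a b)) by reflexivity.
  destruct (CV_radius (PS_plus a b)); simpl in H; tauto.
Qed.

Lemma entire_scal k a : entire a -> entire (fun n => k * a n).
Proof.
  unfold entire. intros Ha. destruct (Req_dec k 0) as [-> | Hk].
  - rewrite (CV_radius_ext _ (fun _ => 0)) by (intros; ring). apply CV_radius_const_0.
  - rewrite (CV_radius_ext _ (PS_scal k a)) by reflexivity. rewrite CV_radius_scal; auto.
Qed.

Lemma entire_mul_index a : entire a -> entire (fun n => INR n * a n).
Proof.
  unfold entire. intros Ha.
  rewrite (CV_radius_ext _ (PS_incr_1 (PS_derive a))).
  - rewrite CV_radius_incr_1, CV_radius_derive. auto.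
  - intros [|n]; unfold PS_incr_1, PS_derive; simpl; [apply Rmult_0_l | reflexivity].
Qed.

Lemma entire_DAlembert a C : (forall n, a n <> 0) ->
  eventually (fun n => Rabs (a (S n) / a n) <= C / INR (S n)) -> entire a.
Proof.
  intros Hn [N HN]. apply CV_radius_infinite_DAlembert; auto.
  apply (is_lim_seq_le_le_loc (fun _ => 0) _ (fun n => C / INR (S n))).
  - exists N. intros n Hn0. split; [apply Rabs_pos | apply HN; auto].
  - apply is_lim_seq_const.
  - replace (Finite 0) with (Rbar_mult C 0) by (simpl; f_equal; ring).
    apply is_lim_seq_scal_l.
    apply (is_lim_seq_inv _ p_infty); [| discriminate].
    apply (is_lim_seq_incr_1 INR p_infty), is_lim_seq_INR.
Qed.

(* The coefficient action of the Euler operator [s d/ds] on [phi m b e] below. *)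
Definition euler_coef (m e : R) (b : nat -> R) (k : nat) : R := (e + m * INR k) * b k.

Lemma entire_euler_coef m e b : entire b -> entire (euler_coef m e b).
Proof.
  intros Hb. apply (entire_ext (fun n => e * b n + m * (INR n * b n))).
  - intros n. unfold euler_coef. ring.
  - apply entire_plus; apply entire_scal; [| apply entire_mul_index]; auto.
Qed.

Definition phi (m : R) (b : nat -> R) (e s : R) : R := Rpower s e * PSeries b (Rpower s m).

Lemma phi_plus m a b e s : entire a -> entire b ->
  phi m (fun n => a n + b n) e s = phi m a e s + phi m b e s.
Proof.
  intros Ha Hb. unfold phi.
  rewrite (PSeries_ext _ (PS_plus a b)) by reflexivity.
  rewrite PSeries_plus by (apply ex_pseries_entire; auto). R_eq. ring.
Qed.

Lemma phi_scal m k b e s : phi m (fun n => k * b n) e s = k * phi m b e s.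
Proof.
  unfold phi. rewrite (PSeries_ext _ (PS_scal k b)) by reflexivity.
  rewrite PSeries_scal. R_eq. ring.
Qed.

Lemma phi_pred m b e s : 0 < s -> s * phi m b (e - 1) s = phi m b e s.
Proof.
  intros Hs. unfold phi. replace e with (1 + (e - 1)) at 2 by ring.
  rewrite Rpower_plus, Rpower_1 by auto. ring.
Qed.

Lemma is_derive_phi m b e s : 0 < s -> entire b ->
  is_derive (phi m b e) s (phi m (euler_coef m e b) (e - 1) s).
Proof.
  intros Hs Hb. unfold phi. set (w := Rpower s m).
  eapply is_derive_val.
  { apply (Derive.is_derive_mult (fun z => Rpower z e) (fun z => PSeries b (Rpower z m))).
    - apply is_derive_Rpower; auto.
    - apply (is_derive_comp (PSeries b) (fun z => Rpower z m)).
      + apply is_derive_PSeries. rewrite Hb. simpl. auto.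
      + apply is_derive_Rpower; auto. }
  fold w.
  assert (HD : PSeries (euler_coef m e b) w = e * PSeries b w + m * (w * PSeries (PS_derive b) w)).
  { rewrite <- PSeries_incr_1, <- (PSeries_scal m), <- (PSeries_scal e).
    rewrite <- PSeries_plus.
    - apply PSeries_ext. intros [|n]; unfold euler_coef, PS_derive, PS_plus, PS_scal, PS_incr_1;
        simpl; R_eq; ring.
    - apply ex_pseries_entire, (entire_ext (fun n => e * b n)); [reflexivity | apply entire_scal; auto].
    - apply ex_pseries_entire, (entire_ext (fun n => m * PS_incr_1 (PS_derive b) n)); [reflexivity |].
      apply entire_scal. unfold entire. rewrite CV_radius_incr_1, CV_radius_derive. auto. }
  rewrite HD.
  assert (HR : Rpower s e * Rpower s (m - 1) = Rpower s (e - 1) * w).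
  { unfold w. rewrite <- !Rpower_plus. f_equal. ring. }
  R_eq. transitivity (e * Rpower s (e - 1) * PSeries b w
    + m * (Rpower s e * Rpower s (m - 1)) * PSeries (PS_derive b) w); [ring |].
  rewrite HR. ring.
Qed.

Lemma sum_lt_ext n f g : (forall j, (j < n)%nat -> f j = g j) -> sum_lt n f = sum_lt n g.
Proof.
  induction n as [|n IH]; intros H; simpl; [reflexivity |].
  rewrite H by lia. f_equal. apply IH. intros j Hj. apply H. lia.
Qed.

Lemma sum_lt_nonneg n f : (forall j, 0 <= f j) -> 0 <= sum_lt n f.
Proof. induction n as [|n IH]; intros H; simpl; [lra |]. pose proof (H n). pose proof (IH H). lra. Qed.

Lemma sum_lt_affine n f a b : sum_lt n (fun j => a * f j + b) = a * sum_lt n f + INR n * b.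
Proof. induction n as [|n IH]; cbn [sum_lt]; [simpl; ring |]. rewrite IH, S_INR. ring. Qed.

Lemma upd_id (x : nat -> R) i : upd x i (x i) = x.
Proof.
  apply functional_extensionality. intros j. unfold upd.
  destruct (Nat.eqb_spec j i); subst; reflexivity.
Qed.

Lemma upd_eq (x : nat -> R) i s : upd x i s i = s.
Proof. unfold upd. rewrite Nat.eqb_refl. reflexivity. Qed.

Lemma upd_neq (x : nat -> R) i j s : j <> i -> upd x i s j = x j.
Proof. intros H. unfold upd. destruct (Nat.eqb_spec j i); [contradiction | reflexivity]. Qed.

Lemma sum_lt_upd_sq d x i s : (i < d)%nat ->
  sum_lt d (fun j => upd x i s j ^ 2) = sum_lt d (fun j => x j ^ 2) - x i ^ 2 + s ^ 2.
Proof.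
  induction d as [|d IH]; intros H; [lia |].
  cbn [sum_lt]. destruct (Nat.eq_dec i d) as [-> | Hid].
  - rewrite (sum_lt_ext d _ (fun j => x j ^ 2)), upd_eq; [ring |].
    intros j Hj. rewrite upd_neq by lia. reflexivity.
  - rewrite IH, upd_neq by lia. ring.
Qed.

Definition sq_interval (d : nat) (c : R) (x : nat -> R) (t : R) : R :=
  c ^ 2 * t ^ 2 - sum_lt d (fun j => x j ^ 2).

(* [cone] without the square root; being open, it is where all computations take place. *)
Definition cone_sq (d : nat) (c : R) (x : nat -> R) (t : R) : Prop :=
  0 < t /\ 0 < sq_interval d c x t.

Lemma sq_interval_upd d c x t i s : (i < d)%nat ->
  sq_interval d c (upd x i s) t = sq_interval d c x t + x i ^ 2 - s ^ 2.
Proof. intros. unfold sq_interval. rewrite sum_lt_upd_sq by auto. ring. Qed.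

Lemma cone_sq_near_t d c x t : cone_sq d c x t -> locally t (fun s => cone_sq d c x s).
Proof.
  intros [Ht Hs]. apply filter_and; [apply locally_pos; auto |].
  apply (ex_derive_continuous (fun s => sq_interval d c x s)).
  - unfold sq_interval. auto_derive. auto.
  - apply locally_pos; auto.
Qed.

Lemma cone_sq_near_x d c x t i : cone_sq d c x t -> locally (x i) (fun s => cone_sq d c (upd x i s) t).
Proof.
  intros [Ht Hs]. destruct (Nat.lt_ge_cases i d) as [Hi | Hi].
  - apply (filter_imp (fun s => 0 < sq_interval d c x t + x i ^ 2 - s ^ 2)).
    + intros s H. split; auto. rewrite sq_interval_upd; auto.
    + apply (ex_derive_continuous (fun s => sq_interval d c x t + x i ^ 2 - s ^ 2)).
      * auto_derive. auto.
      * apply locally_pos. lra.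
  - apply filter_forall. intros s. split; auto. unfold sq_interval in *.
    rewrite (sum_lt_ext d _ (fun j => x j ^ 2)); auto.
    intros j Hj. rewrite upd_neq by lia. reflexivity.
Qed.

Section Cone.

Variables (d : nat) (c : R).

Lemma partial_ext_cone o u v x t :
  (forall x t, cone_sq d c x t -> u x t = v x t) -> cone_sq d c x t ->
  partial o u x t = partial o v x t.
Proof.
  intros H HU. destruct o as [j |]; simpl; apply Derive_ext_loc.
  - generalize (cone_sq_near_x d c x t j HU). apply filter_imp. auto.
  - generalize (cone_sq_near_t d c x t HU). apply filter_imp. auto.
Qed.

Lemma ex_partial_ext_cone o u v x t :
  (forall x t, cone_sq d c x t -> u x t = v x t) -> cone_sq d c x t ->
  ex_partial o u x t -> ex_partial o v x t.
Proof.
  intros H HU. destruct o as [j |]; simpl; apply ex_derive_ext_loc.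
  - generalize (cone_sq_near_x d c x t j HU). apply filter_imp. auto.
  - generalize (cone_sq_near_t d c x t HU). apply filter_imp. auto.
Qed.

Lemma wave_op_ext_cone u v x t :
  (forall x t, cone_sq d c x t -> u x t = v x t) -> cone_sq d c x t ->
  wave_op d c u x t = wave_op d c v x t.
Proof.
  intros H HU. unfold wave_op.
  assert (H1 : forall o x t, cone_sq d c x t -> partial o u x t = partial o v x t).
  { intros o x' t' HU'. apply partial_ext_cone; auto. }
  rewrite (partial_ext_cone None (partial None u) (partial None v)) by auto.
  f_equal. f_equal. apply sum_lt_ext. intros j Hj. apply partial_ext_cone; auto.
Qed.

Lemma is_derive_phi_interval_t m b e x t : entire b -> cone_sq d c x t ->
  is_derive (fun s => phi m b e (sq_interval d c x s)) t
    (phi m (euler_coef m e b) (e - 1) (sq_interval d c x t) * (2 * c ^ 2 * t)).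
Proof.
  intros Hb [Ht Hs]. eapply is_derive_val.
  - apply (is_derive_comp (phi m b e) (fun s => sq_interval d c x s)).
    + apply is_derive_phi; auto.
    + unfold sq_interval. auto_derive; auto.
  - R_eq. ring.
Qed.

Lemma is_derive_phi_interval_x m b e x t j : (j < d)%nat -> entire b -> cone_sq d c x t ->
  is_derive (fun s => phi m b e (sq_interval d c (upd x j s) t)) (x j)
    (phi m (euler_coef m e b) (e - 1) (sq_interval d c x t) * (-2 * x j)).
Proof.
  intros Hj Hb [Ht Hs].
  apply (is_derive_ext (fun s => phi m b e (sq_interval d c x t + x j ^ 2 - s ^ 2))).
  { intros s. rewrite sq_interval_upd; auto. }
  eapply is_derive_val.
  - apply (is_derive_comp (phi m b e) (fun s => sq_interval d c x t + x j ^ 2 - s ^ 2)).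
    + replace (sq_interval d c x t + x j ^ 2 - x j ^ 2) with (sq_interval d c x t) by ring.
      apply is_derive_phi; auto.
    + auto_derive; auto.
  - replace (sq_interval d c x t + x j ^ 2 - x j ^ 2) with (sq_interval d c x t) by ring.
    R_eq. ring.
Qed.

(* A class of functions closed under the partial derivatives on the cone. *)
Inductive cone_smooth (m : R) : ((nat -> R) -> R -> R) -> Prop :=
| cone_smooth_phi b e : entire b -> cone_smooth m (fun x t => phi m b e (sq_interval d c x t))
| cone_smooth_time : cone_smooth m (fun x t => t)
| cone_smooth_coord i : cone_smooth m (fun x t => x i)
| cone_smooth_const k : cone_smooth m (fun x t => k)
| cone_smooth_plus u v : cone_smooth m u -> cone_smooth m v -> cone_smooth m (fun x t => u x t + v x t)
| cone_smooth_mult u v : cone_smooth m u -> cone_smooth m v -> cone_smooth m (fun x t => u x t * v x t)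
| cone_smooth_ext u v : cone_smooth m u -> (forall x t, cone_sq d c x t -> u x t = v x t) ->
    cone_smooth m v.

Definition partial_ok (m : R) (o : option nat) (u : (nat -> R) -> R -> R) : Prop :=
  (forall x t, cone_sq d c x t -> ex_partial o u x t) /\ cone_smooth m (partial o u).

Lemma partial_ok_const_deriv m o u k :
  (forall x t, ex_partial o u x t /\ partial o u x t = k) -> partial_ok m o u.
Proof.
  intros H. split; [intros; apply H |].
  apply (cone_smooth_ext m (fun _ _ => k)); [constructor |]. intros x t _. symmetry. apply H.
Qed.

Lemma partial_ok_phi m b e o : valid_dir d o -> entire b ->
  partial_ok m o (fun x t => phi m b e (sq_interval d c x t)).
Proof.
  intros Ho Hb. destruct o as [j |]; simpl in Ho; split.
  - intros x t HU. eexists. apply is_derive_phi_interval_x; auto.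
  - apply (cone_smooth_ext m
      (fun x t => phi m (euler_coef m e b) (e - 1) (sq_interval d c x t) * (-2 * x j))).
    + apply cone_smooth_mult; [apply cone_smooth_phi, entire_euler_coef; auto |].
      apply cone_smooth_mult; constructor.
    + intros x t HU. symmetry. apply is_derive_unique, is_derive_phi_interval_x; auto.
  - intros x t HU. eexists. apply is_derive_phi_interval_t; auto.
  - apply (cone_smooth_ext m
      (fun x t => phi m (euler_coef m e b) (e - 1) (sq_interval d c x t) * (2 * c ^ 2 * t))).
    + apply cone_smooth_mult; [apply cone_smooth_phi, entire_euler_coef; auto |].
      apply cone_smooth_mult; constructor.
    + intros x t HU. symmetry. apply is_derive_unique, is_derive_phi_interval_t; auto.
Qed.

Lemma partial_ok_cone_smooth m u o : valid_dir d o -> cone_smooth m u -> partial_ok m o u.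
Proof.
  intros Ho Hu. induction Hu as [b e Hb | | i | k | u v _ [Eu Su] _ [Ev Sv]
                                | u v Hu [Eu Su] Hv [Ev Sv] | u v _ [Eu Su] Huv].
  - apply partial_ok_phi; auto.
  - apply (partial_ok_const_deriv _ _ _ (if o then 0 else 1)). intros x t.
    destruct o; simpl; split;
      auto using ex_derive_const, ex_derive_id, Derive_const, Derive_id.
  - apply (partial_ok_const_deriv _ _ _ 
      (match o with Some j => if Nat.eqb i j then 1 else 0 | None => 0 end)).
    intros x t. destruct o as [j |]; simpl; [unfold upd; destruct (Nat.eqb_spec i j) |]; split;
      auto using ex_derive_const, ex_derive_id, Derive_const, Derive_id.
  - apply (partial_ok_const_deriv _ _ _ 0). intros x t.
    destruct o; simpl; split; auto using ex_derive_const, Derive_const.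
  - split.
    + intros x t HU. pose proof (Eu x t HU) as Du. pose proof (Ev x t HU) as Dv.
      destruct o; simpl in *; exact (ex_derive_plus _ _ _ Du Dv).
    + apply (cone_smooth_ext m (fun x t => partial o u x t + partial o v x t));
        [constructor; auto |].
      intros x t HU. pose proof (Eu x t HU) as Du. pose proof (Ev x t HU) as Dv.
      destruct o; simpl in *; symmetry; exact (Derive_plus _ _ _ Du Dv).
  - split.
    + intros x t HU. pose proof (Eu x t HU) as Du. pose proof (Ev x t HU) as Dv.
      destruct o; simpl in *; exact (ex_derive_mult _ _ _ Du Dv).
    + apply (cone_smooth_ext m (fun x t => partial o u x t * v x t + u x t * partial o v x t));
        [apply cone_smooth_plus; apply cone_smooth_mult; auto |].
      intros x t HU. pose proof (Eu x t HU) as Du. pose proof (Ev x t HU) as Dv.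
      destruct o; simpl in *; rewrite (Derive_mult _ _ _ Du Dv), ?upd_id; reflexivity.
  - split.
    + intros x t HU. apply (ex_partial_ext_cone o u); auto.
    + apply (cone_smooth_ext m (partial o u)); auto.
      intros x t HU. apply partial_ext_cone; auto.
Qed.

Lemma cone_smooth_iter_partial m u l : cone_smooth m u -> List.Forall (valid_dir d) l ->
  cone_smooth m (iter_partial l u).
Proof.
  intros Hu. induction l as [| o l IH]; intros Hl; simpl; auto.
  inversion Hl; subst. apply partial_ok_cone_smooth; auto.
Qed.

Definition wave_coef (m e : R) (b : nat -> R) (k : nat) : R :=
  4 * c ^ 2 * euler_coef m (e - 1) (euler_coef m e b) k
  + 2 * c ^ 2 * (INR d + 1) * euler_coef m e b k.

Lemma entire_wave_coef m e b : entire b -> entire (wave_coef m e b).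
Proof. intros. apply entire_plus; apply entire_scal; repeat apply entire_euler_coef; auto. Qed.

(* With [s = sq_interval d c x t]: [u_tt = 4 c^4 t^2 phi'' + 2 c^2 phi'] and
   [u_(x_j x_j) = 4 x_j^2 phi'' - 2 phi'], so the wave operator gives
   [4 c^2 s phi'' + 2 c^2 (d + 1) phi']. *)
Lemma wave_op_phi m b e x t : entire b -> cone_sq d c x t ->
  wave_op d c (fun x t => phi m b e (sq_interval d c x t)) x t
  = phi m (wave_coef m e b) (e - 1) (sq_interval d c x t).
Proof.
  intros Hb HU.
  set (b1 := euler_coef m e b). set (b2 := euler_coef m (e - 1) b1).
  assert (Hb1 : entire b1) by (apply entire_euler_coef; auto).
  assert (Hb2 : entire b2) by (apply entire_euler_coef; auto).
  set (u := fun x t => phi m b e (sq_interval d c x t)).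
  set (P1 := phi m b1 (e - 1) (sq_interval d c x t)).
  set (P2 := phi m b2 (e - 1 - 1) (sq_interval d c x t)).
  assert (Htt : partial None (partial None u) x t = P2 * (2 * c ^ 2 * t) ^ 2 + P1 * (2 * c ^ 2)).
  { rewrite (partial_ext_cone None _ (fun x t => phi m b1 (e - 1) (sq_interval d c x t) * (2 * c ^ 2 * t)))
      by (auto; intros; apply is_derive_unique, is_derive_phi_interval_t; auto).
    apply is_derive_unique. eapply is_derive_val.
    - apply (Derive.is_derive_mult (fun s => phi m b1 (e - 1) (sq_interval d c x s))).
      + apply is_derive_phi_interval_t; auto.
      + auto_derive; auto.
    - R_eq. unfold P1, P2, b2. ring. }
  assert (Hxx : forall j, (j < d)%nat ->
    partial (Some j) (partial (Some j) u) x t = 4 * P2 * x j ^ 2 + -2 * P1).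
  { intros j Hj.
    rewrite (partial_ext_cone (Some j) _ (fun x t => phi m b1 (e - 1) (sq_interval d c x t) * (-2 * x j)))
      by (auto; intros; apply is_derive_unique, is_derive_phi_interval_x; auto).
    apply is_derive_unique.
    apply (is_derive_ext (fun s => phi m b1 (e - 1) (sq_interval d c (upd x j s) t) * (-2 * s)));
      [intros s; rewrite upd_eq; reflexivity |].
    eapply is_derive_val.
    - apply (Derive.is_derive_mult (fun s => phi m b1 (e - 1) (sq_interval d c (upd x j s) t))).
      + apply is_derive_phi_interval_x; auto.
      + auto_derive; auto.
    - rewrite upd_id. R_eq. unfold P1, P2, b2. ring. }
  unfold wave_op. fold u. rewrite Htt, (sum_lt_ext d _ _ Hxx), sum_lt_affine.
  unfold wave_coef. rewrite phi_plus, !phi_scal by (apply entire_scal; auto).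
  fold b1 b2. fold P1.
  rewrite <- (phi_pred m b2 (e - 1)) by apply HU. fold P2.
  unfold sq_interval. ring.
Qed.

Fixpoint wave_coef_iter (m : R) (b : nat -> R) (n : nat) : nat -> R :=
  match n with
  | O => b
  | S n' => wave_coef m (-1 - INR n') (wave_coef_iter m b n')
  end.

Lemma entire_wave_coef_iter m b n : entire b -> entire (wave_coef_iter m b n).
Proof. intros Hb. induction n; simpl; auto. apply entire_wave_coef; auto. Qed.

Lemma wave_op_iter_phi m b u : entire b ->
  (forall x t, cone_sq d c x t -> u x t = phi m b (-1) (sq_interval d c x t)) ->
  forall n x t, cone_sq d c x t ->
  wave_op_iter n d c u x t = phi m (wave_coef_iter m b n) (-1 - INR n) (sq_interval d c x t).
Proof.
  intros Hb Hu n. induction n as [| n IH]; intros x t HU; cbn [wave_op_iter wave_coef_iter].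
  - rewrite Hu by auto. f_equal. simpl. ring.
  - rewrite (wave_op_ext_cone _ (fun x t => phi m (wave_coef_iter m b n) (-1 - INR n) (sq_interval d c x t)))
      by auto.
    rewrite wave_op_phi by (auto; apply entire_wave_coef_iter; auto).
    f_equal. rewrite S_INR. ring.
Qed.

Lemma wave_coef_iter_closed m b n k : INR d + 1 = 2 * m + 2 ->
  wave_coef_iter m b n k
  = (4 * c ^ 2) ^ n * falling (m * INR k) n * falling (m * INR k + m) n * b k.
Proof.
  intros Hd. induction n as [| n IH]; cbn [wave_coef_iter falling]; [ring |].
  unfold wave_coef, euler_coef. rewrite IH, Hd. simpl. ring.
Qed.

End Cone.

Lemma Gamma_add_nat_ge z N : 1 <= z -> (1 <= N)%nat -> z * Gamma z <= Gamma (z + INR N).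
Proof.
  intros Hz HN.
  rewrite (Gamma_falling N (z + INR N)) by lra. replace (z + INR N - INR N) with z by ring.
  pose proof (falling_ge N (z + INR N) HN ltac:(lra)). replace (z + INR N - INR N) with z in H by ring.
  pose proof (Gamma_pos z ltac:(lra)). nra.
Qed.

Definition flight_coef (r m : R) (N k : nat) : R :=
  match k with
  | O => 0
  | S _ => r ^ (k * N) / (Gamma (m * INR k) * Gamma (m * INR k + m))
  end.

Section FlightCoef.

Variables (r : R) (N : nat).
Hypotheses (Hr : 0 < r) (HN : (1 <= N)%nat).

Let m := INR N / 2.

Lemma m_ge_half : / 2 <= m.
Proof. unfold m. apply le_INR in HN. simpl in HN. lra. Qed.

Lemma flight_coef_ratio k : (1 <= k)%nat ->
  Rabs (flight_coef r m N (S (S k)) / flight_coef r m N (S k)) <= r ^ N / m / INR (S k).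
Proof.
  intros Hk. pose proof m_ge_half.
  set (z := m * INR (S k)).
  assert (Hz : 1 <= z) by (unfold z; apply le_INR in Hk; rewrite S_INR; simpl in Hk; nra).
  assert (Gz : 0 < Gamma z) by (apply Gamma_pos; lra).
  assert (Gzm : 0 < Gamma (z + m)) by (apply Gamma_pos; lra).
  assert (GzN : z * Gamma z <= Gamma (z + INR N)) by (apply Gamma_add_nat_ge; auto).
  assert (GzN' : 0 < Gamma (z + INR N)) by (apply Gamma_pos; pose proof (pos_INR N); lra).
  assert (Hrat : flight_coef r m N (S (S k)) / flight_coef r m N (S k)
                 = r ^ N * Gamma z / Gamma (z + INR N)).
  { unfold flight_coef. fold z.
    replace (m * INR (S (S k))) with (z + m) by (unfold z; rewrite !S_INR; ring).
    replace (z + m + m) with (z + INR N) by (unfold m; field).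
    replace (S (S k) * N)%nat with (N + S k * N)%nat by lia. rewrite pow_add.
    pose proof (pow_lt r (S k * N) Hr).
    field. repeat split; lra. }
  rewrite Hrat, Rabs_right.
  - replace (r ^ N / m / INR (S k)) with (r ^ N / z) 
      by (unfold z; field; repeat split; try lra; apply not_0_INR; lia).
    unfold Rdiv. rewrite Rmult_assoc. apply Rmult_le_compat_l; [apply pow_le; lra |].
    apply (Rmult_le_reg_l z); [lra |]. apply (Rmult_le_reg_r (Gamma (z + INR N))); [lra |].
    field_simplify; lra.
  - apply Rle_ge, Rdiv_le_0_compat; [apply Rmult_le_pos; [apply pow_le |] |]; lra.
Qed.

Lemma entire_flight_coef : entire (flight_coef r m N).
Proof.
  pose proof m_ge_half.
  apply (entire_ext (PS_incr_1 (fun k => flight_coef r m N (S k)))); [intros [|k]; reflexivity |].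
  unfold entire. rewrite CV_radius_incr_1.
  apply (entire_DAlembert _ (r ^ N / m)).
  - intros k. unfold flight_coef. apply Rmult_integral_contrapositive. split.
    + apply pow_nonzero. lra.
    + apply Rinv_neq_0_compat, Rmult_integral_contrapositive.
      rewrite S_INR. pose proof (pos_INR k).
      split; apply Rgt_not_eq, Gamma_pos; nra.
  - exists 1%nat. intros k Hk. apply flight_coef_ratio; auto.
Qed.

(* [m (k + 2) = m k + N], so the falling factorials turn [Gamma (m (k + 2))] and
   [Gamma (m (k + 2) + m)] back into [Gamma (m k)] and [Gamma (m k + m)]; for [k = 0]
   the factor [falling N N] vanishes. *)
Lemma flight_coef_shift k :
  falling (m * INR (S (S k))) N * falling (m * INR (S (S k)) + m) N * flight_coef r m N (S (S k))
  = (r ^ 2) ^ N * flight_coef r m N k.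
Proof.
  pose proof m_ge_half.
  destruct k as [| k].
  - replace (m * INR 2) with (INR N) by (unfold m; simpl; field).
    rewrite falling_nat_diag by auto. simpl. ring.
  - set (z := m * INR (S k)).
    assert (Hz : 0 < z) by (unfold z; rewrite S_INR; pose proof (pos_INR k); nra).
    assert (E : m * INR (S (S (S k))) = z + INR N) by (unfold z, m; rewrite !S_INR; field).
    unfold flight_coef. fold z. rewrite E.
    rewrite (Gamma_falling N (z + INR N)), (Gamma_falling N (z + INR N + m)) by lra.
    replace (z + INR N - INR N) with z by ring.
    replace (z + INR N + m - INR N) with (z + m) by ring.
    pose proof (falling_pos N (z + INR N) ltac:(lra)).
    pose proof (falling_pos N (z + INR N + m) ltac:(lra)).
    pose proof (Gamma_pos z Hz). pose proof (Gamma_pos (z + m) ltac:(lra)).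
    rewrite <- pow_mult. replace (S (S (S k)) * N)%nat with (2 * N + S k * N)%nat by lia.
    rewrite pow_add.
    field. repeat split; lra.
Qed.

Lemma wave_coef_iter_flight_coef d c : d = S N -> forall k,
  wave_coef_iter d c m (flight_coef r m N) N k
  = (4 * c ^ 2 * r ^ 2) ^ N * PS_incr_n (flight_coef r m N) 2 k.
Proof.
  intros Hd k. rewrite wave_coef_iter_closed by (rewrite Hd, S_INR; unfold m; field).
  destruct k as [| [| k]]; cbn [PS_incr_n PS_incr_1].
  - R_eq. ring.
  - R_eq. replace (m * 1 + m) with (INR N) by (unfold m; field).
    rewrite falling_nat_diag by auto. ring.
  - rewrite (Rpow_mult_distr (4 * c ^ 2) (r ^ 2)),
      (Rmult_assoc ((4 * c ^ 2) ^ N) ((r ^ 2) ^ N)), <- flight_coef_shift. ring.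
Qed.

Lemma phi_wave_coef_iter_flight_coef d c s : d = S N -> 0 < s ->
  phi m (wave_coef_iter d c m (flight_coef r m N) N) (-1 - INR N) s
  = (4 * c ^ 2 * r ^ 2) ^ N * phi m (flight_coef r m N) (-1) s.
Proof.
  intros Hd Hs. unfold phi.
  rewrite (PSeries_ext _ _ _ (wave_coef_iter_flight_coef d c Hd)).
  rewrite (PSeries_ext _ (PS_scal ((4 * c ^ 2 * r ^ 2) ^ N) (PS_incr_n (flight_coef r m N) 2)))
    by reflexivity.
  rewrite PSeries_scal, PSeries_incr_n.
  assert (Hw : Rpower s (-1 - INR N) * Rpower s m ^ 2 = Rpower s (-1)).
  { rewrite <- Rpower_pow, Rpower_mult, <- Rpower_plus by apply Rpower_pos.
    f_equal. unfold m. simpl. field. }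
  R_eq. rewrite <- Hw. ring.
Qed.

Lemma is_series_phi_flight_coef s : 0 < s ->
  is_series (fun k => r ^ (S k * N) * Rpower s (INR (S k) / 2 * INR N - 1) /
      (Gamma (INR (S k) / 2 * INR N) * Gamma (INR N / 2 * INR (S k + 1))))
    (phi m (flight_coef r m N) (-1) s).
Proof.
  intros Hs. unfold phi. set (w := Rpower s m).
  assert (H : is_series (fun k => flight_coef r m N (S k) * w ^ S k) (PSeries (flight_coef r m N) w)).
  { apply (is_series_incr_1 (fun k => flight_coef r m N k * w ^ k)).
    match goal with
    | |- is_series _ ?l => replace l with (PSeries (flight_coef r m N) w) by (R_eq; ring)
    end.
    apply is_pseries_R, PSeries_correct, ex_pseries_entire, entire_flight_coef. }
  eapply is_series_ext; [| exact (is_series_scal_l (Rpower s (-1)) _ _ H)].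
  intros k. unfold flight_coef.
  replace (INR (S k) / 2 * INR N) with (m * INR (S k)) by (unfold m; field).
  replace (INR N / 2 * INR (S k + 1)) with (m * INR (S k) + m)
    by (unfold m; rewrite plus_INR; simpl; field).
  replace (Rpower s (m * INR (S k) - 1)) with (Rpower s (-1) * w ^ S k).
  - R_eq. unfold Rdiv. ring.
  - unfold w. rewrite <- Rpower_pow, Rpower_mult, <- Rpower_plus by apply Rpower_pos.
    f_equal. ring.
Qed.

End FlightCoef.

Lemma INR_ge_1 n : (1 <= n)%nat -> 1 <= INR n.
Proof. intros H. apply le_INR in H. exact H. Qed.

Lemma Gamma_half_add_half n : (1 <= n)%nat ->
  Gamma (INR n / 2 + / 2) = Gamma (/ 2) * Gamma (INR n) / (Gamma (INR n / 2) * 2 ^ (n - 1)).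
Proof.
  intros Hn. rewrite <- (Gamma_duplication_nat n Hn).
  pose proof (INR_ge_1 n Hn).
  assert (0 < Gamma (INR n / 2)) by (apply Gamma_pos; lra).
  assert (0 < 2 ^ (n - 1)) by (apply pow_lt; lra).
  field. lra.
Qed.

Lemma entire_ML2_coef N : (1 <= N)%nat -> entire (fun k => / Gamma (INR N * INR k + INR N)).
Proof.
  intros HN. pose proof (INR_ge_1 N HN).
  apply (entire_DAlembert _ 1).
  - intros k. apply Rinv_neq_0_compat, Rgt_not_eq, Gamma_pos. pose proof (pos_INR k). nra.
  - exists 0%nat. intros k _.
    set (z := INR N * INR k + INR N).
    assert (Hz : INR (S k) <= z) by (unfold z; rewrite S_INR; pose proof (pos_INR k); nra).
    assert (Hz1 : 1 <= z) by (rewrite S_INR in Hz; pose proof (pos_INR k); lra).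
    replace (INR N * INR (S k) + INR N) with (z + INR N) by (unfold z; rewrite S_INR; ring).
    pose proof (Gamma_pos z ltac:(lra)). pose proof (Gamma_add_nat_ge z N Hz1 HN).
    assert (0 < Gamma (z + INR N)) by (apply Gamma_pos; lra).
    replace (/ Gamma (z + INR N) / / Gamma z) with (Gamma z / Gamma (z + INR N)) by (field; lra).
    rewrite Rabs_right by (apply Rle_ge, Rdiv_le_0_compat; lra).
    apply (Rmult_le_reg_l (INR (S k) * Gamma (z + INR N))).
    + apply Rmult_lt_0_compat; [apply lt_0_INR; lia | lra].
    + field_simplify; [nra | apply not_0_INR; lia | lra].
Qed.

Lemma Series_pos a : ex_series a -> (forall n, 0 <= a n) -> 0 < a O -> 0 < Series a.
Proof.
  intros Ha Hpos H0. rewrite Series_incr_1 by auto.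
  assert (0 <= Series (fun k => a (S k))).
  { replace 0 with (Series (fun _ => 0)).
    2:{ rewrite (Series_ext _ (fun n => 0 * a n)) by (intros; ring). rewrite Series_scal_l. ring. }
    apply Series_le; [intros; split; auto; lra |]. apply (ex_series_incr_1 a); auto. }
  lra.
Qed.

Lemma ML2_pos N y : (1 <= N)%nat -> 0 < y -> 0 < ML2 (INR N) (INR N) y.
Proof.
  intros HN Hy. pose proof (INR_ge_1 N HN). unfold ML2. apply Series_pos.
  - apply (ex_series_ext (fun k => / Gamma (INR N * INR k + INR N) * y ^ k)).
    + intros k. apply Rmult_comm.
    + apply ex_pseries_R, ex_pseries_entire, entire_ML2_coef; auto.
  - intros n. left. apply Rdiv_lt_0_compat; [apply pow_lt; auto |].
    apply Gamma_pos. pose proof (pos_INR n). nra.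
  - apply Rdiv_lt_0_compat; [apply pow_lt; auto |]. apply Gamma_pos. simpl. lra.
Qed.

Lemma ML4_eq_ML2 d y : (2 <= d)%nat ->
  ML4 d ((y / 2) ^ (d - 1))
  = 2 ^ (d - 2) / Gamma (/ 2) * ML2 (INR (d - 1)) (INR (d - 1)) (y ^ (d - 1)).
Proof.
  intros Hd. set (N := (d - 1)%nat). replace (d - 2)%nat with (N - 1)%nat by (unfold N; lia).
  unfold ML4, ML2. fold N. rewrite <- Series_scal_l. apply Series_ext. intros k.
  set (M := ((k + 1) * N)%nat).
  assert (HM : (1 <= M)%nat) by (unfold M, N; nia).
  replace (INR (k + 1) / 2 * INR N) with (INR M / 2) by (unfold M; rewrite mult_INR; field).
  replace (INR N / 2 * INR (k + 1)) with (INR M / 2) by (unfold M; rewrite mult_INR; field).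
  replace (INR N * INR k + INR N) with (INR M) by (unfold M; rewrite mult_INR, plus_INR; simpl; ring).
  rewrite Gamma_half_add_half by auto.
  pose proof (INR_ge_1 M HM).
  assert (Gm2 : 0 < Gamma (INR M / 2)) by (apply Gamma_pos; lra).
  assert (Gh : 0 < Gamma (/ 2)) by (apply Gamma_pos; lra).
  assert (Gm : 0 < Gamma (INR M)) by (apply Gamma_pos; lra).
  replace (2 ^ (M - 1)) with (2 ^ (N * k) * 2 ^ (N - 1))
    by (rewrite <- pow_add; f_equal; unfold M, N; nia).
  rewrite <- !pow_mult, (Rpow_mult_distr y (/ 2)), pow_inv.
  pose proof (pow_lt 2 (N * k) ltac:(lra)). pose proof (pow_lt 2 (N - 1) ltac:(lra)).
  field. lra.
Qed.

Lemma pX_term d c lam x t k : (2 <= d)%nat -> 0 < c -> 0 < lam -> 0 < t ->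
  p_cond d c x t (S k) * probN d lam t (S k)
  = / (Rpower PI (INR d / 2) * (c * t) ^ (d - 2) *
       (2 ^ (d - 2) / Gamma (/ 2) * ML2 (INR (d - 1)) (INR (d - 1)) ((lam * t) ^ (d - 1)))) *
    ((lam / (2 * c)) ^ (S k * (d - 1)) *
       Rpower (c ^ 2 * t ^ 2 - norm_d d x ^ 2) (INR (S k) / 2 * INR (d - 1) - 1) /
     (Gamma (INR (S k) / 2 * INR (d - 1)) * Gamma (INR (d - 1) / 2 * INR (S k + 1)))).
Proof.
  intros Hd Hc Hl Ht. unfold p_cond, probN.
  set (N := (d - 1)%nat). set (n := S k). set (M := ((n + 1) * N)%nat).
  replace (d - 2)%nat with (N - 1)%nat by (unfold N; lia).
  assert (HM : (1 <= M)%nat) by (unfold M, n, N; nia).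
  replace (INR (n + 1) / 2 * INR N) with (INR M / 2) by (unfold M; rewrite mult_INR; field).
  replace (INR N / 2 * INR (n + 1)) with (INR M / 2) by (unfold M; rewrite mult_INR; field).
  fold M. rewrite Gamma_half_add_half by auto.
  replace (M - 1)%nat with (n * N + (N - 1))%nat by (unfold M, n, N; nia).
  rewrite !pow_add, !(Rpow_mult_distr c t), (Rpow_mult_distr lam t (n * N)).
  replace ((lam / (2 * c)) ^ (n * N)) with (lam ^ (n * N) / (2 ^ (n * N) * c ^ (n * N)))
    by (unfold Rdiv; rewrite Rpow_mult_distr, pow_inv, Rpow_mult_distr; reflexivity).
  pose proof (INR_ge_1 M HM). pose proof (INR_ge_1 N ltac:(unfold N; lia)).
  assert (0 < Gamma (INR M / 2)) by (apply Gamma_pos; lra).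
  assert (0 < Gamma (/ 2)) by (apply Gamma_pos; lra).
  assert (0 < Gamma (INR M)) by (apply Gamma_pos; lra).
  assert (0 < Gamma (INR n / 2 * INR N)) by (apply Gamma_pos; unfold n; rewrite S_INR; pose proof (pos_INR k); nra).
  assert (0 < ML2 (INR N) (INR N) ((lam * t) ^ N)) by (apply ML2_pos; [unfold N; lia | apply pow_lt; nra]).
  pose proof (Rpower_pos PI (INR d / 2)).
  pose proof (pow_lt 2 (n * N) ltac:(lra)). pose proof (pow_lt 2 (N - 1) ltac:(lra)).
  pose proof (pow_lt c (n * N) Hc). pose proof (pow_lt t (n * N) Ht).
  pose proof (pow_lt c (N - 1) Hc). pose proof (pow_lt t (N - 1) Ht).
  field. repeat split; lra.
Qed.

Lemma norm_d_sq d x : norm_d d x ^ 2 = sum_lt d (fun j => x j ^ 2).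
Proof.
  unfold norm_d. rewrite <- Rsqr_pow2. apply Rsqr_sqrt, sum_lt_nonneg. intros. apply pow2_ge_0.
Qed.

Lemma cone_iff_cone_sq d c x t : 0 < c -> cone d c x t <-> cone_sq d c x t.
Proof.
  intros Hc. unfold cone, cone_sq, sq_interval. rewrite <- norm_d_sq.
  pose proof (sqrt_pos (sum_lt d (fun j => x j ^ 2))) as Hn. fold (norm_d d x) in Hn.
  split; intros [Ht H]; split; auto; assert (0 < c * t) by nra; nra.
Qed.

Lemma f_fun_phi d c lam x t : (2 <= d)%nat -> 0 < c -> 0 < lam -> cone_sq d c x t ->
  f_fun d c lam x t
  = phi (INR (d - 1) / 2) (flight_coef (lam / (2 * c)) (INR (d - 1) / 2) (d - 1)) (-1)
      (sq_interval d c x t).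
Proof.
  intros Hd Hc Hl [Ht Hs].
  unfold sq_interval in Hs |- *. rewrite <- norm_d_sq in Hs |- *.
  unfold f_fun, pX. rewrite ML4_eq_ML2 by auto.
  rewrite (Series_ext _ _ (fun k => pX_term d c lam x t k Hd Hc Hl Ht)), Series_scal_l.
  assert (Hr : 0 < lam / (2 * c)) by (apply Rdiv_lt_0_compat; lra).
  rewrite (is_series_unique _ _ (is_series_phi_flight_coef _ (d - 1) Hr ltac:(lia) _ Hs)).
  assert (0 < ML2 (INR (d - 1)) (INR (d - 1)) ((lam * t) ^ (d - 1)))
    by (apply ML2_pos; [lia | apply pow_lt; nra]).
  assert (0 < Gamma (/ 2)) by (apply Gamma_pos; lra).
  pose proof (Rpower_pos PI (INR d / 2)). pose proof (pow_lt (c * t) (d - 2) ltac:(nra)).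
  pose proof (pow_lt 2 (d - 2) ltac:(lra)).
  field. repeat split; lra.
Qed.

Theorem theorem3p1 (d : nat) (c lam : R) :
  (2 <= d)%nat -> 0 < c -> 0 < lam ->
  (forall (x : nat -> R) (t : R), cone d c x t ->
     is_series
       (fun k => (lam / (2 * c)) ^ (S k * (d - 1)) *
          Rpower (c ^ 2 * t ^ 2 - norm_d d x ^ 2) (INR (S k) / 2 * INR (d - 1) - 1) /
          (Gamma (INR (S k) / 2 * INR (d - 1)) * Gamma (INR (d - 1) / 2 * INR (S k + 1))))
       (f_fun d c lam x t))
  /\ smooth_on d (cone d c) (f_fun d c lam)
  /\ (forall (x : nat -> R) (t : R), cone d c x t ->
        wave_op_iter (d - 1) d c (f_fun d c lam) x t
        = lam ^ (2 * (d - 1)) * f_fun d c lam x t).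
Proof.
  intros Hd Hc Hl.
  set (m := INR (d - 1) / 2). set (r := lam / (2 * c)). set (b := flight_coef r m (d - 1)).
  assert (Hr : 0 < r) by (apply Rdiv_lt_0_compat; lra).
  assert (Hb : entire b) by (apply entire_flight_coef; auto; lia).
  assert (Hf : forall x t, cone_sq d c x t -> f_fun d c lam x t = phi m b (-1) (sq_interval d c x t))
    by (intros; apply f_fun_phi; auto).
  split; [| split].
  - intros x t Hx%(cone_iff_cone_sq d c x t Hc). rewrite Hf by auto.
    pose proof (proj2 Hx) as Hs. unfold sq_interval in Hs |- *. rewrite <- norm_d_sq in Hs |- *.
    apply is_series_phi_flight_coef; auto. lia.
  - intros l o Hlo x t Hx%(cone_iff_cone_sq d c x t Hc).
    inversion Hlo as [| o' l' Ho Hl']; subst.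
    apply (partial_ok_cone_smooth d c m); auto. apply cone_smooth_iter_partial; auto.
    apply (cone_smooth_ext d c m _ _ (cone_smooth_phi d c m b (-1) Hb)).
    intros; symmetry; auto.
  - intros x t Hx%(cone_iff_cone_sq d c x t Hc).
    rewrite (wave_op_iter_phi d c m b _ Hb Hf) by auto.
    unfold m, b. rewrite phi_wave_coef_iter_flight_coef by (auto; try lia; apply Hx).
    fold m b. rewrite <- Hf by auto.
    f_equal. rewrite pow_mult. f_equal. unfold r. field. lra.
Qed.
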